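(* Let $(X,*,0)$ be a solid branchwise implicative weak BCC-algebra. Then $X$ is branchwise positive implicative if and only if $X$ is a commutative BCK-algebra.
   Context: A weak BCC-algebra is a set $X$ with a binary operation $*$ and a constant $0$ satisfying, for all $x,y,z\in X$: (i) $((x*y)*(z*y))*(x*z)=0$; (ii) $x*x=0$; (iii) $x*0=x$; (iv) $x*y=y*x=0$ implies $x=y$. The relation $x\leqslant y$ iff $x*y=0$ is a partial order on $X$. Let $I(X)$ be the set of minimal elements of $X$ with respect to $\leqslant$. For $a\in I(X)$ the branch initiated by $a$ is $B(a)=\{x\in X: a\leqslant x\}$; ''belonging to the same branch'' means lying in a common $B(a)$. A weak BCC-algebra is called (left) solid if $(x*y)*z=(x*z)*y$ holds for all $x,y$ belonging to the same branch and all $z\in X$. It is branchwise implicative if $x*(y*x)=x$ for all $x,y$ in the same branch, and branchwise positive implicative if $(x*y)*y=x*y$ for all $x,y$ in the same branch. A BCK-algebra is a weak BCC-algebra satisfying $0*x=0$ and $(x*y)*z=(x*z)*y$ for all $x,y,z$; it is commutative if $x*(x*y)=y*(y*x)$ for all $x,y$. *)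

Set Implicit Arguments.

Section WeakBCC.
Variables (X : Type) (op : X -> X -> X) (z : X).

Definition is_weakBCC : Prop :=
  (forall x y w, op (op (op x y) (op w y)) (op x w) = z) /\
  (forall x, op x x = z) /\
  (forall x, op x z = x) /\
  (forall x y, op x y = z -> op y x = z -> x = y).

Definition bcc_le (x y : X) : Prop := op x y = z.

Definition minimal (a : X) : Prop := forall x, bcc_le x a -> x = a.

Definition in_branch (a x : X) : Prop := bcc_le a x.

Definition same_branch (x y : X) : Prop :=
  exists a, minimal a /\ in_branch a x /\ in_branch a y.

Definition solid : Prop :=
  forall x y w, same_branch x y -> op (op x y) w = op (op x w) y.

Definition branchwise_implicative : Prop :=
  forall x y, same_branch x y -> op x (op y x) = x.

Definition branchwise_positive_implicative : Prop :=
  forall x y, same_branch x y -> op (op x y) y = op x y.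

Definition is_BCK : Prop :=
  is_weakBCC /\
  (forall x, op z x = z) /\
  (forall x y w, op (op x y) w = op (op x w) y).

Definition is_commutative_BCK : Prop :=
  is_BCK /\ (forall x y, op x (op x y) = op y (op y x)).

End WeakBCC.


Set Implicit Arguments.

(* In a weak BCC-algebra the element 0 * (0 * x) is minimal and lies below x,
   so it shares a branch with x; branchwise positive implicativity at this pair
   forces 0 * x = 0.  Conversely 0 * x = 0 holds in every BCK-algebra.  Once
   0 * x = 0, every element lies in the branch B(0), so solidity and branchwise
   implicativity become the global exchange and implicative laws: X is an
   implicative BCK-algebra.  It remains to recall that implicative BCK-algebras
   are both positive implicative and commutative, the key fact being that an
   element below both y and x * y must be 0. *)

Section WeakBCC.
Variables (X : Type) (op : X -> X -> X) (z : X).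
Hypothesis weak : is_weakBCC op z.
Local Infix "*" := op.
Local Notation "x <= y" := (bcc_le op z x y).

Lemma bcc_axiom (x y w : X) : (x * y) * (w * y) <= x * w.
Proof. apply (proj1 weak). Qed.

Lemma op_self (x : X) : x * x = z.
Proof. apply (proj1 (proj2 weak)). Qed.

Lemma op_zero_r (x : X) : x * z = x.
Proof. apply (proj1 (proj2 (proj2 weak))). Qed.

Lemma bcc_le_antisym (x y : X) : x <= y -> y <= x -> x = y.
Proof. apply (proj2 (proj2 (proj2 weak))). Qed.

Lemma le_zero_eq (x : X) : x <= z -> x = z.
Proof. unfold bcc_le. now rewrite op_zero_r. Qed.

Lemma bcc_le_trans (x y w : X) : x <= y -> y <= w -> x <= w.
Proof.
  unfold bcc_le; intros Hxy Hyw.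
  pose proof (bcc_axiom x w y) as H; unfold bcc_le in H.
  now rewrite Hxy, Hyw, !op_zero_r in H.
Qed.

Lemma op_le_antitone_r (u v w : X) : u <= v -> w * v <= w * u.
Proof.
  unfold bcc_le; intros Huv.
  pose proof (bcc_axiom w v u) as H; unfold bcc_le in H.
  now rewrite Huv, op_zero_r in H.
Qed.

Lemma op_le_monotone_l (u v w : X) : u <= v -> u * w <= v * w.
Proof.
  unfold bcc_le; intros Huv.
  pose proof (bcc_axiom u w v) as H; unfold bcc_le in H.
  now rewrite Huv, op_zero_r in H.
Qed.

Lemma zero_op_zero_op_le (x : X) : z * (z * x) <= x.
Proof.
  pose proof (bcc_axiom x x z) as H; unfold bcc_le in H.
  now rewrite op_self, op_zero_r in H.
Qed.

Lemma zero_op_zero_op_zero_op (x : X) : z * (z * (z * x)) = z * x.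
Proof.
  apply bcc_le_antisym.
  - apply zero_op_zero_op_le.
  - apply op_le_antitone_r, zero_op_zero_op_le.
Qed.

Lemma zero_op_eq_of_le (x y : X) : x <= y -> z * x = z * y.
Proof.
  intros Hxy.
  assert (Hyx : z * y <= z * x) by now apply op_le_antitone_r.
  apply bcc_le_antisym; [| exact Hyx].
  pose proof (bcc_axiom (z * y) (z * x) z) as H; unfold bcc_le in H, Hyx.
  now rewrite Hyx, zero_op_zero_op_zero_op, op_zero_r in H.
Qed.

Lemma minimal_zero_op_zero_op (x : X) : minimal op z (z * (z * x)).
Proof.
  intros y Hy.
  pose proof (zero_op_eq_of_le Hy) as Hzy.
  rewrite zero_op_zero_op_zero_op in Hzy.
  apply bcc_le_antisym; [exact Hy |].
  pose proof (zero_op_zero_op_le y) as H.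
  now rewrite Hzy in H.
Qed.

Lemma minimal_zero : minimal op z z.
Proof. intros y; apply le_zero_eq. Qed.

Lemma zero_op_of_branchwise_positive_implicative :
  branchwise_positive_implicative op z -> forall x, z * x = z.
Proof.
  intros Hpi x.
  set (m := z * (z * x)).
  assert (Hmx : m <= x) by apply zero_op_zero_op_le.
  assert (Hbranch : same_branch op z m x).
  { exists m; split; [apply minimal_zero_op_zero_op |].
    split; [apply op_self | exact Hmx]. }
  pose proof (Hpi m x Hbranch) as H.
  unfold bcc_le in Hmx; unfold m in H, Hmx.
  now rewrite Hmx in H.
Qed.

Section ZeroOp.
Hypothesis zero_op : forall x, z * x = z.

Lemma same_branch_all (x y : X) : same_branch op z x y.
Proof. exists z; repeat split; [apply minimal_zero | apply zero_op | apply zero_op]. Qed.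

Lemma exchange_of_solid :
  solid op z -> forall x y w, (x * y) * w = (x * w) * y.
Proof. intros Hsolid x y w; apply Hsolid, same_branch_all. Qed.

Lemma implicative_of_branchwise_implicative :
  branchwise_implicative op z -> forall x y, x * (y * x) = x.
Proof. intros Himp x y; apply Himp, same_branch_all. Qed.

End ZeroOp.

Section ImplicativeBCK.
Hypothesis zero_op : forall x, z * x = z.
Hypothesis exchange : forall x y w, (x * y) * w = (x * w) * y.
Hypothesis implicative : forall x y, x * (y * x) = x.

Lemma op_le_l (x y : X) : x * y <= x.
Proof. unfold bcc_le; now rewrite exchange, op_self, zero_op. Qed.

Lemma op_op_le (x y : X) : x * (x * y) <= y.
Proof. unfold bcc_le; now rewrite exchange, op_self. Qed.

Lemma op_op_op (x y : X) : x * (x * (x * y)) = x * y.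
Proof.
  apply bcc_le_antisym; [apply op_op_le |].
  apply op_le_antitone_r, op_op_le.
Qed.

(* t <= x * y <= x * t, so t = t * (x * t) = 0 by the implicative law. *)
Lemma le_op_eq_zero (t x y : X) : t <= y -> t <= x * y -> t = z.
Proof.
  intros Hty Htxy.
  assert (Hle : t <= x * t).
  { apply (bcc_le_trans Htxy).
    pose proof (bcc_axiom x y t) as H; unfold bcc_le in H, Hty |- *.
    now rewrite Hty, op_zero_r in H. }
  unfold bcc_le in Hle; now rewrite implicative in Hle.
Qed.

Lemma positive_implicative (x y : X) : (x * y) * y = x * y.
Proof.
  apply bcc_le_antisym; [apply op_le_l |].
  apply (le_op_eq_zero (x := x) (y := y)); [apply op_op_le | apply op_le_l].
Qed.

Lemma op_op_le_op_op (x y : X) : y * (y * x) <= x * (x * y).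
Proof.
  set (v := y * (y * x)).
  apply (le_op_eq_zero (x := x) (y := y)).
  - apply (bcc_le_trans (op_le_l v _)).
    unfold bcc_le, v; now rewrite exchange, op_self, zero_op.
  - pose proof (op_le_monotone_l (x * (x * y)) (op_op_le y x)) as H.
    now rewrite op_op_op in H.
Qed.

Lemma commutative (x y : X) : x * (x * y) = y * (y * x).
Proof. apply bcc_le_antisym; apply op_op_le_op_op. Qed.

End ImplicativeBCK.
End WeakBCC.

Theorem theorem3p9 (X : Type) (op : X -> X -> X) (z : X) :
  is_weakBCC op z ->
  solid op z ->
  branchwise_implicative op z ->
  (branchwise_positive_implicative op z <-> is_commutative_BCK op z).
Proof.
  intros weak Hsolid Himp; split.
  - intros Hpi.
    pose proof (zero_op_of_branchwise_positive_implicative weak Hpi) as zero_op.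
    pose proof (exchange_of_solid weak zero_op Hsolid) as exchange.
    pose proof (implicative_of_branchwise_implicative weak zero_op Himp) as impl.
    split; [exact (conj weak (conj zero_op exchange)) |].
    exact (commutative weak zero_op exchange impl).
  - intros [[_ [zero_op exchange]] _] x y _.
    pose proof (implicative_of_branchwise_implicative weak zero_op Himp) as impl.
    exact (positive_implicative weak zero_op exchange impl x y).
Qed.
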